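(* Let $p,q$ be distinct propositional letters, and define $p^0:=q\looparrowright p$, $p^{n+1}:=p\to p^n$. For every $n\in\omega\setminus\{0\}$ and every Epstein relation $\mathfrak{R}$: if $\mathfrak{R}\vDash\sigma(q\looparrowright p^n)$ for every substitution $\sigma$, then $\mathfrak{R}\vDash p\looparrowright p$.
   Context: Language: propositional letters $\Phi=\{p_0,p_1,\dots\}$; connectives $\neg$, $\lor,\wedge,\to,\leftrightarrow,\vartriangle,\looparrowright$; $\mathsf{FOR}$ the set of all formulas. A substitution is an endomorphism of the free formula algebra. An Epstein model is $\langle v,\mathfrak{R}\rangle$ with $v:\Phi\to\{0,1\}$ and $\mathfrak{R}\subseteq\mathsf{FOR}^2$ (an Epstein relation); truth: letters via $v$, boolean connectives classical, $\langle v,\mathfrak{R}\rangle\vDash\varphi\vartriangle\psi$ iff both true and $\langle\varphi,\psi\rangle\in\mathfrak{R}$; $\langle v,\mathfrak{R}\rangle\vDash\varphi\looparrowright\psi$ iff $\varphi\to\psi$ true and $\langle\varphi,\psi\rangle\in\mathfrak{R}$. $\mathfrak{R}\vDash\varphi$ iff $\langle v,\mathfrak{R}\rangle\vDash\varphi$ for every valuation $v$. *)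

From Stdlib Require Import Arith.

Inductive form : Type :=
| Var  : nat -> form
| Neg  : form -> form
| Or   : form -> form -> form
| And  : form -> form -> form
| Imp  : form -> form -> form
| Iff  : form -> form -> form
| Tri  : form -> form -> form
| Loop : form -> form -> form.

Fixpoint subst (s : nat -> form) (f : form) : form :=
  match f with
  | Var i => s i
  | Neg a => Neg (subst s a)
  | Or a b => Or (subst s a) (subst s b)
  | And a b => And (subst s a) (subst s b)
  | Imp a b => Imp (subst s a) (subst s b)
  | Iff a b => Iff (subst s a) (subst s b)
  | Tri a b => Tri (subst s a) (subst s b)
  | Loop a b => Loop (subst s a) (subst s b)
  end.

Definition erel := form -> form -> Prop.

Fixpoint sat (v : nat -> bool) (R : erel) (f : form) : Prop :=
  match f with
  | Var i => v i = true
  | Neg a => ~ sat v R a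
  | Or a b => sat v R a \/ sat v R b
  | And a b => sat v R a /\ sat v R b
  | Imp a b => sat v R a -> sat v R b
  | Iff a b => (sat v R a <-> sat v R b)
  | Tri a b => (sat v R a /\ sat v R b) /\ R a b
  | Loop a b => (sat v R a -> sat v R b) /\ R a b
  end.

Definition valid (R : erel) (f : form) : Prop := forall v, sat v R f.

Fixpoint ppow (p q : form) (n : nat) : form :=
  match n with
  | 0 => Loop q p
  | S m => Imp p (ppow p q m)
  end.

(* Substituting p for both letters turns q ↝ p^n into p ↝ (p → ... → (p ↝ p)).
   Under the valuation making p true, truth of this formula forces every
   antecedent p to be discharged, so the innermost p ↝ p must hold, which
   requires ⟨p, p⟩ ∈ R; and that is all p ↝ p needs to be valid. *)

Lemma subst_ppow (s : nat -> form) (a b : form) (n : nat) :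
  subst s (ppow a b n) = ppow (subst s a) (subst s b) n.
Proof. induction n as [|n IH]; simpl; congruence. Qed.

Lemma sat_ppow_rel (v : nat -> bool) (R : erel) (a b : form) (n : nat) :
  sat v R a -> sat v R (ppow a b n) -> R b a.
Proof.
  intros Ha; induction n as [|n IH]; simpl.
  - intros [_ Hba]; exact Hba.
  - intros H; exact (IH (H Ha)).
Qed.

Lemma valid_Loop_refl (R : erel) (f : form) : R f f -> valid R (Loop f f).
Proof. intros Hff v; simpl; auto. Qed.

Theorem mainTheorem7 :
  forall (i j : nat), i <> j ->
  forall (n : nat), 0 < n ->
  forall (R : erel),
    (forall s : nat -> form, valid R (subst s (Loop (Var j) (ppow (Var i) (Var j) n)))) ->
    valid R (Loop (Var i) (Var i)).
Proof.
  intros i j _ n _ R Hvalid.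
  apply valid_Loop_refl.
  set (v := fun _ : nat => true).
  assert (Hp : sat v R (Var i)) by reflexivity.
  destruct (Hvalid (fun _ => Var i) v) as [Himp _].
  simpl in Himp; rewrite subst_ppow in Himp.
  exact (sat_ppow_rel v R (Var i) (Var i) n Hp (Himp Hp)).
Qed.
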